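(* Let $X,Y,Z$ be shift spaces, $\phi_1 : X \to Z$ and $\phi_2 : Y \to Z$ codes, and let $\Sigma = \{(x,y) \in X \times Y : \phi_1(x) = \phi_2(y)\}$ with $\psi_1 : \Sigma \to X$, $\psi_1(x,y)=x$, and $\psi_2 : \Sigma \to Y$, $\psi_2(x,y) = y$. Then: (1) If $\phi_1$ is open, then $\psi_2$ is open. (2) If $\phi_2$ is onto and $\psi_2$ is open, then $\phi_1$ is open.
   Context: Shift spaces are closed shift-invariant subsets of $\mathcal{A}^{\mathbb{Z}}$; a code is a continuous shift-commuting map. $\Sigma$ (with coordinatewise shift) is a shift space, called the fiber product. Open: images of open sets are open. *)

From mathcomp Require Import all_boot all_order all_algebra.
Set Implicit Arguments. Unset Strict Implicit. Unset Printing Implicit Defensive.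
Import Order.TTheory GRing.Theory Num.Theory.
Local Open Scope ring_scope.

Definition conf (A : Type) := int -> A.

Definition cset (A : Type) := conf A -> Prop.

Definition shift (A : Type) (x : conf A) : conf A := fun i => x (i + 1).

(* x and y agree on the central window [-n, n]; the sets
   {y | agree_on n x y} are the basic (cylinder) neighbourhoods of x
   in the product topology of A^Z (A finite, discrete). *)
Definition agree_on (A : Type) (n : nat) (x y : conf A) : Prop :=
  forall i : int, - (n%:Z) <= i <= n%:Z -> x i = y i.

Definition closed_set (A : Type) (X : cset A) : Prop :=
  forall x : conf A, (forall n : nat, exists y, X y /\ agree_on n x y) -> X x.

(* Shift space: closed and shift-invariant (sigma(X) = X, equivalently
   sigma^{-1}(X) = X since sigma is a bijection). *)
Definition shift_space (A : finType) (X : cset A) : Prop :=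
  closed_set X /\ (forall x : conf A, X x <-> X (shift x)).

Definition rel_open (A : Type) (X U : cset A) : Prop :=
  (forall x, U x -> X x) /\
  (forall x, U x -> exists n : nat, forall y, X y -> agree_on n x y -> U y).

Definition cont_on (A B : Type) (X : cset A) (f : conf A -> conf B) : Prop :=
  forall x, X x -> forall n : nat, exists m : nat,
    forall y, X y -> agree_on m x y -> agree_on n (f x) (f y).

Definition code (A B : finType) (X : cset A) (Y : cset B)
  (f : conf A -> conf B) : Prop :=
  (forall x, X x -> Y (f x)) /\ cont_on X f /\
  (forall x, X x -> f (shift x) = shift (f x)).

Definition image_set (A B : Type) (f : conf A -> conf B) (U : cset A) : cset B :=
  fun y => exists x, U x /\ f x = y.

Definition open_map (A B : Type) (X : cset A) (Y : cset B)
  (f : conf A -> conf B) : Prop :=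
  forall U, rel_open X U -> rel_open Y (image_set f U).

Definition onto_on (A B : Type) (X : cset A) (Y : cset B)
  (f : conf A -> conf B) : Prop :=
  forall y, Y y -> exists x, X x /\ f x = y.

Definition proj1c (A B : Type) (w : conf (A * B)) : conf A := fun i => (w i).1.
Definition proj2c (A B : Type) (w : conf (A * B)) : conf B := fun i => (w i).2.

Definition fiber_product (A B C : Type) (X : cset A) (Y : cset B)
  (phi1 : conf A -> conf C) (phi2 : conf B -> conf C) : cset (A * B) :=
  fun w => X (proj1c w) /\ Y (proj2c w) /\ phi1 (proj1c w) = phi2 (proj2c w).

(* Part (1) is a direct neighbourhood chase: a small cylinder around (x,y) in the
   fiber product projects onto a neighbourhood of y, because phi1 maps a cylinder
   around x onto a neighbourhood of phi1 x = phi2 y and phi2 is continuous at y.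

   Part (2) uses compactness.  If phi1 (U) were not a neighbourhood of phi1 x, pick
   z_m in Z, agreeing with phi1 x on [-m, m] and outside phi1 (U), and (phi2 being
   onto) y_m in Y with phi2 y_m = z_m.  A cluster point y of (y_m) lies in Y and
   satisfies phi2 y = phi1 x, so (x, y) is in the open set of pairs with first
   coordinate in U; its projection is a neighbourhood of y, hence contains some
   y_m, which forces z_m into phi1 (U). *)
From mathcomp Require Import all_boot all_order all_algebra.
From mathcomp Require Import zify.
From Stdlib Require Import Classical ClassicalEpsilon FunctionalExtensionality.
Set Implicit Arguments. Unset Strict Implicit. Unset Printing Implicit Defensive.
Local Open Scope ring_scope.

Lemma agree_on_trans (A : Type) n (x y z : conf A) :
  agree_on n x y -> agree_on n y z -> agree_on n x z.
Proof. by move=> Hxy Hyz i Hi; rewrite Hxy // Hyz. Qed.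

Lemma agree_on_le (A : Type) n m (x y : conf A) :
  (n <= m)%N -> agree_on m x y -> agree_on n x y.
Proof. by move=> Hnm Hxy i Hi; apply: Hxy; lia. Qed.

Definition pairc (A B : Type) (x : conf A) (y : conf B) : conf (A * B) :=
  fun i => (x i, y i).

Lemma agree_on_pairc (A B : Type) n (w : conf (A * B)) x y :
  agree_on n (proj1c w) x -> agree_on n (proj2c w) y -> agree_on n w (pairc x y).
Proof.
move=> Hx Hy i Hi; rewrite /pairc -(Hx i Hi) -(Hy i Hi) /proj1c /proj2c.
by case: (w i).
Qed.

Definition infinitely_often (P : nat -> Prop) : Prop :=
  forall N, exists2 m, (N <= m)%N & P m.

Lemma infinitely_often_pigeonhole (T : finType) (P : nat -> Prop) (f : nat -> T) :
  infinitely_often P -> exists t, infinitely_often (fun m => P m /\ f m = t).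
Proof.
move=> HP; apply: NNPP => Hnone.
have bound t : exists N, forall m, (N <= m)%N -> ~ (P m /\ f m = t).
  apply: NNPP => Hno; apply: Hnone; exists t => N.
  apply: NNPP => Hno'; apply: Hno; exists N => m Hm Hfm; apply: Hno'; by exists m.
have [Nt HNt] := choice _ bound.
have [m Hm Pm] := HP (\max_(t : T) Nt t).
apply: (HNt (f m) m) => //.
by apply: leq_trans Hm; exact: leq_bigmax.
Qed.

Definition cluster_point (B : Type) (s : nat -> conf B) (y : conf B) : Prop :=
  forall n N, exists2 m, (N <= m)%N & agree_on n y (s m).

Section DiagonalLimit.

Variables (B : finType) (s : nat -> conf B).

Definition window_ends (k m : nat) : B * B := (s m (- k%:Z), s m k%:Z).

Variable refine : (nat -> Prop) -> nat -> B * B.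
Hypothesis refineP : forall P k, infinitely_often P ->
  infinitely_often (fun m => P m /\ window_ends k m = refine P k).

Fixpoint nested_indices (k : nat) : nat -> Prop :=
  match k with
  | 0%N => fun _ => True
  | k'.+1 => fun m =>
      nested_indices k' m /\ window_ends k' m = refine (nested_indices k') k'
  end.

Lemma nested_indices_io k : infinitely_often (nested_indices k).
Proof.
elim: k => [|k IH]; first by move=> N; exists N.
exact: refineP.
Qed.

Lemma nested_indices_le k j m :
  (k <= j)%N -> nested_indices j m -> nested_indices k m.
Proof.
elim: j => [|j IH]; first by rewrite leqn0 => /eqP ->.
by rewrite leq_eqVlt => /orP [/eqP -> // | Hkj] [/(IH Hkj)].
Qed.

(* [Negz k] is the index -(k+1). *)
Definition diagonal_limit (i : int) : B :=
  match i with
  | Posz k => (refine (nested_indices k) k).2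
  | Negz k => (refine (nested_indices k.+1) k.+1).1
  end.

Lemma diagonal_limit_cluster : cluster_point s diagonal_limit.
Proof.
move=> n N; have [m Hm Sm] := nested_indices_io n.+1 N.
exists m => // -[k|k] Hi /=.
- have Hk : (k.+1 <= n.+1)%N by lia.
  by have [_ <-] := nested_indices_le Hk Sm.
- have Hk : (k.+2 <= n.+1)%N by lia.
  by have [_ <-] := nested_indices_le Hk Sm; rewrite NegzE.
Qed.

End DiagonalLimit.

Lemma cluster_point_exists (B : finType) (s : nat -> conf B) :
  exists y, cluster_point s y.
Proof.
have refine_ex P k : exists t, infinitely_often P ->
    infinitely_often (fun m => P m /\ window_ends s k m = t).
  have [HP|HP] := classic (infinitely_often P); last by exists (window_ends s k 0%N).
  have [t Ht] := infinitely_often_pigeonhole (window_ends s k) HP.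
  by exists t.
have [refine refineP] := choice _ (fun P => choice _ (refine_ex P)).
by exists (diagonal_limit s refine); exact: diagonal_limit_cluster.
Qed.

Lemma closed_set_cluster_point (B : Type) (Y : cset B) (s : nat -> conf B) y :
  closed_set Y -> (forall m, Y (s m)) -> cluster_point s y -> Y y.
Proof.
move=> cY Ys Hy; apply: cY => n.
by have [m _ Hm] := Hy n 0%N; exists (s m).
Qed.

Lemma cont_on_cluster_point (B C : Type) (Y : cset B) (f : conf B -> conf C)
    (s : nat -> conf B) y z :
  cont_on Y f -> (forall m, Y (s m) /\ agree_on m z (f (s m))) ->
  cluster_point s y -> Y y -> f y = z.
Proof.
move=> cf Hs Hy Yy; apply: functional_extensionality => i.
have [k Hk] := cf y Yy `|i|%N.
have [m Hm Hym] := Hy k `|i|%N.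
have [Ysm Hzsm] := Hs m.
have Hi : - (`|i|%N%:Z) <= i <= `|i|%N%:Z by lia.
have Him : - (m%:Z) <= i <= m%:Z by lia.
by rewrite (Hzsm i Him) (Hk _ Ysm Hym i Hi).
Qed.

Section FiberProduct.

Variables (A C : Type) (B : finType) (X : cset A) (Y : cset B) (Z : cset C).
Variables (phi1 : conf A -> conf C) (phi2 : conf B -> conf C).

Let Sigma := fiber_product X Y phi1 phi2.

Lemma fiber_product_pairc x y :
  X x -> Y y -> phi1 x = phi2 y -> Sigma (pairc x y).
Proof. by []. Qed.

Lemma rel_open_fiber_proj1 U :
  rel_open X U -> rel_open Sigma (fun w => Sigma w /\ U (proj1c w)).
Proof.
move=> [_ oU]; split; first by move=> ? [].
move=> w [_ Uw]; have [n Hn] := oU _ Uw.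
exists n => w' [Xw' Sw'] Aw'; split; first by [].
by apply: Hn => // i Hi; rewrite /proj1c (Aw' i Hi).
Qed.

Lemma open_map_fiber_proj2 :
  (forall y, Y y -> Z (phi2 y)) -> cont_on Y phi2 ->
  open_map X Z phi1 -> open_map Sigma Y (@proj2c A B).
Proof.
move=> phi2Z cphi2 op1 U [USigma oU]; split.
  by move=> _ [w [Uw <-]]; have [_ []] := USigma w Uw.
move=> _ [w [Uw <-]]; have [Xw [Yw Ew]] := USigma w Uw.
have [n Hn] := oU w Uw.
pose V x := X x /\ agree_on n (proj1c w) x.
have oV : rel_open X V.
  split; first by move=> ? [].
  move=> x [Xx Hx]; exists n => x' Xx' Hx'; split => //.
  exact: agree_on_trans Hx Hx'.
have Vw : image_set phi1 V (phi1 (proj1c w)) by exists (proj1c w).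
have [m Hm] := (op1 V oV).2 _ Vw.
have [k Hk] := cphi2 (proj2c w) Yw m.
exists (maxn n k) => y Yy Hy.
have [x [[Xx Hx] Exy]] : image_set phi1 V (phi2 y).
  apply: Hm; first exact: phi2Z.
  by rewrite Ew; apply: Hk => //; apply: agree_on_le Hy; lia.
exists (pairc x y); split; last by [].
apply: Hn; first exact: fiber_product_pairc.
by apply: agree_on_pairc => //; apply: agree_on_le Hy; lia.
Qed.

Lemma open_map_of_fiber_proj2 :
  (forall x, X x -> Z (phi1 x)) -> closed_set Y -> cont_on Y phi2 ->
  onto_on Y Z phi2 -> open_map Sigma Y (@proj2c A B) -> open_map X Z phi1.
Proof.
move=> phi1Z cY cphi2 onto2 op2 U [UX oU]; split.
  by move=> _ [x [Ux <-]]; exact/phi1Z/UX.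
move=> _ [x [Ux <-]]; apply: NNPP => Hnbhd.
have bad m : exists y, Y y /\
    agree_on m (phi1 x) (phi2 y) /\ ~ image_set phi1 U (phi2 y).
  apply: NNPP => Hno; apply: Hnbhd; exists m => z Zz Hz.
  apply: NNPP => HzU; apply: Hno.
  by have [y [Yy Ey]] := onto2 z Zz; exists y; rewrite Ey.
have [ys Hys] := choice _ bad.
have [y Hy] := cluster_point_exists ys.
have Yy : Y y by apply: closed_set_cluster_point Hy => // m; case: (Hys m).
have Exy : phi2 y = phi1 x.
  by apply: (cont_on_cluster_point cphi2 _ Hy) => // m; case: (Hys m) => ? [].
have Wy : image_set (@proj2c A B) (fun w => Sigma w /\ U (proj1c w)) y.
  exists (pairc x y); split => //; split => //.
  exact: fiber_product_pairc (UX x Ux) Yy (esym Exy).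
have [n Hn] := (op2 _ (rel_open_fiber_proj1 (conj UX oU))).2 _ Wy.
have [m _ Hym] := Hy n 0%N.
have [Yym [_ Hnot]] := Hys m.
have [w [[[_ [_ Ew]] Uw] Ewy]] := Hn (ys m) Yym Hym.
by apply: Hnot; exists (proj1c w); rewrite -Ewy.
Qed.

End FiberProduct.

Theorem lemma2p4 (A B C : finType) (X : cset A) (Y : cset B) (Z : cset C)
  (phi1 : conf A -> conf C) (phi2 : conf B -> conf C) :
  shift_space X -> shift_space Y -> shift_space Z ->
  code X Z phi1 -> code Y Z phi2 ->
  (open_map X Z phi1 ->
     open_map (fiber_product X Y phi1 phi2) Y (@proj2c A B)) /\
  (onto_on Y Z phi2 ->
     open_map (fiber_product X Y phi1 phi2) Y (@proj2c A B) ->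
     open_map X Z phi1).
Proof.
move=> _ [cY _] _ [phi1Z _] [phi2Z [cphi2 _]]; split.
- exact: open_map_fiber_proj2.
- exact: open_map_of_fiber_proj2.
Qed.
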